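(* Let $A\subseteq\mathbb Z_+^2$ be finite and $k\ge0$ an integer. Then $$|\pi_x(A_{>k})|+|\pi_y(A_{>k})|\le\Big(1+\frac1{k+1}\Big)|A_{>k}|.$$
   Context: $\mathbb Z_+=\{0,1,2,\dots\}$. $\mathrm{row}(x,A)$ (resp. $\mathrm{col}(x,A)$) is the number of points of $A$ on the horizontal (resp. vertical) line through $x$ (counting $x$ itself if $x\in A$). $A_{>k}=\{x\in A:\mathrm{row}(x,A)>k\text{ or }\mathrm{col}(x,A)>k\}$. $\pi_x,\pi_y$ denote projections onto the horizontal and vertical axes. *)

From mathcomp Require Import all_boot all_order all_algebra.
Set Implicit Arguments. Unset Strict Implicit. Unset Printing Implicit Defensive.

(* A finite subset of Z_+^2 is represented by a duplicate-free list of pairs of nats. *)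
Definition row (x : nat * nat) (A : seq (nat * nat)) : nat :=
  count (fun p => p.2 == x.2) A.
Definition col (x : nat * nat) (A : seq (nat * nat)) : nat :=
  count (fun p => p.1 == x.1) A.
Definition A_gt (k : nat) (A : seq (nat * nat)) : seq (nat * nat) :=
  [seq x <- A | (k < row x A) || (k < col x A)].
Definition proj_x (A : seq (nat * nat)) : seq nat := undup (map fst A).
Definition proj_y (A : seq (nat * nat)) : seq nat := undup (map snd A).

(* Call a column (row) heavy if it carries more than k points of A.  All points
   of a heavy line survive in A_{>k}, so each heavy column of A_{>k} contains at
   least k+1 of its points, and a light one at least one.  A point of A_{>k} on a
   light column lies on a heavy row, so the points on light columns and those on
   light rows are disjoint.  With L_x, L_y their numbers and N = |A_{>k}|,
     (k+1) |pi_x| <= N + k L_x,   (k+1) |pi_y| <= N + k L_y,   L_x + L_y <= N,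
   and summing gives (k+1) (|pi_x| + |pi_y|) <= (k+2) N. *)

From Pilot Require Import Defs.
From mathcomp Require Import all_boot all_order all_algebra.
From mathcomp Require Import ring.
Import GRing.Theory Num.Theory.

Lemma mul_count_undup_map (T : Type) (K : eqType) (f : T -> K) (B : seq T)
    (P : pred K) m :
  {in P, forall c, c \in map f B -> m <= count_mem c (map f B)} ->
  m * count P (undup (map f B)) <= count (preim f P) B.
Proof.
move=> fibre_ge; rewrite -count_map -!sum1_count big_distrr /=.
rewrite -(big_undup_iterop_count _ (map f B)) big_seq_cond [leqRHS]big_seq_cond.
apply: leq_sum => c /andP[]; rewrite mem_undup => cB Pc.
by rewrite muln1 Monoid.iteropE iter_addn_0 mul1n fibre_ge.
Qed.

Section HeavyLines.

Variables (k : nat) (A : seq (nat * nat)) (f : nat * nat -> nat).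

Definition heavy (c : nat) : bool := k < count (fun p => f p == c) A.

(* [Defs.] is needed: matrix's [row] from all_algebra shadows [Defs.row]. *)
Hypothesis heavy_line_kept :
  forall p, heavy (f p) -> (k < Defs.row p A) || (k < Defs.col p A).

Lemma count_line_A_gt c :
  heavy c -> count (fun p => f p == c) (A_gt k A) = count (fun p => f p == c) A.
Proof.
move=> heavy_c; rewrite count_filter; apply: eq_count => p /=.
by case: eqP => //= fpc; rewrite heavy_line_kept // fpc.
Qed.

Lemma size_proj_A_gt :
  k.+1 * size (undup (map f (A_gt k A)))
    <= size (A_gt k A) + k * count (preim f (predC heavy)) (A_gt k A).
Proof.
set B := A_gt k A.
have heavy_proj : k.+1 * count heavy (undup (map f B)) <= count (preim f heavy) B.
  apply: mul_count_undup_map => c heavy_c _.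
  by rewrite count_map count_line_A_gt.
have light_proj : count (predC heavy) (undup (map f B)) <= count (preim f (predC heavy)) B.
  by rewrite -count_map count_undup.
rewrite -(count_predC heavy) -(count_predC (preim f heavy) B) mulnDr -addnA.
apply: leq_add => //; rewrite mulSn leq_add ?leq_mul2l ?light_proj ?orbT //.
Qed.

End HeavyLines.

Lemma light_lines_disjoint k A :
  count (preim fst (predC (heavy k A fst))) (A_gt k A)
    + count (preim snd (predC (heavy k A snd))) (A_gt k A) <= size (A_gt k A).
Proof.
rewrite -count_predUI [count (predI _ _) _](@eq_in_count _ _ pred0).
  by rewrite count_pred0 addn0 count_size.
move=> p; rewrite mem_filter => /andP[heavy_p _] /=.
by apply/negbTE; rewrite negb_and !negbK orbC.
Qed.

Lemma A_gt_proj_bound k A :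
  k.+1 * (size (proj_x (A_gt k A)) + size (proj_y (A_gt k A)))
    <= k.+2 * size (A_gt k A).
Proof.
have col_bound := @size_proj_A_gt k A fst (fun p h => introT orP (or_intror h)).
have row_bound := @size_proj_A_gt k A snd (fun p h => introT orP (or_introl h)).
rewrite mulnDr; apply: leq_trans (leq_add col_bound row_bound) _.
by rewrite addnACA -mulnDr !mulSn addnA leq_add2l leq_mul // light_lines_disjoint.
Qed.

Local Open Scope ring_scope.

Lemma ler_nat_mul_succ_div (R : numFieldType) (a n k : nat) :
  (k.+1 * a <= k.+2 * n)%N -> a%:R <= (1 + 1 / k.+1%:R) * n%:R :> R.
Proof.
move=> bound; have -> : (1 + 1 / k.+1%:R) * n%:R = k.+2%:R * n%:R / k.+1%:R :> R.
  by rewrite -[k.+2]addn1 natrD; field; rewrite addrC natr1 pnatr_eq0.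
by rewrite ler_pdivlMr ?ltr0Sn // mulrC -!natrM ler_nat.
Qed.

Theorem mainTheorem13 (A : seq (nat * nat)) (k : nat) (hA : uniq A) :
  ((size (proj_x (A_gt k A)))%:R + (size (proj_y (A_gt k A)))%:R : rat)
    <= (1 + 1 / (k.+1)%:R) * (size (A_gt k A))%:R.
Proof. by rewrite -natrD ler_nat_mul_succ_div // A_gt_proj_bound. Qed.
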